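(* Let $m\ge2$, $\sigma_0=\pm1$ if $m$ is odd and $\sigma_0=(-1)^{m/2}$ if $m$ is even. Let $u_0\in\mathcal{F}_n$ for some $n<\infty$, and let $u$ be the solution of the Cauchy problem $\partial_t u+\sigma_0\partial_x^m u=0$, $u(x,0)=u_0(x)$, $x\in\mathbb{R}$. For $\tau>0$ let $q=(q_0,\dots,q_{m-1})$ be the solution of the hyperbolic system $$\partial_t q_0+\sigma_0\partial_x q_{m-1}=0,\qquad \tau\partial_t q_i+\sum_{j=1}^{m-1}p^*_{ij}\,\partial_x q_{j-1}=\sum_{j=1}^{m-1}p^*_{ij}\,q_j\quad(i=1,\dots,m-1),$$ with initial data $q_j(x,0)=\partial_x^j u_0(x)$, $j=0,\dots,m-1$. Then for every fixed $T\in[0,\infty)$, $$\sup_{x\in\mathbb{R}}|q_0(x,T)-u(x,T)|=\mathcal{O}(\tau)\quad\text{as }\tau\to0^+.$$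
   Context: $\mathcal{F}_n=\{v(x)=\sum_{j=1}^n\hat v_j e^{ik_jx}:\ \hat v_j,k_j\in\mathbb{R}\}$. The matrix $P^*=(p^*_{ij})_{i,j=1}^{m-1}$ is defined by $p^*_{ij}=0$ if $i+j\ne m$, $p^*_{ij}=\sigma_0(-1)^{j-1}$ if $i+j=m$ and $j\le m/2$, and $p^*_{ij}=\sigma_0(-1)^{m-j}$ if $i+j=m$ and $j>m/2$. For initial data in $\mathcal{F}_n$, both problems are solved mode by mode: each Fourier mode $e^{ik_jx}$ evolves independently, $u$ via $\hat u(t)=e^{-\sigma_0 t(ik_j)^m}\hat u(0)$ and $q$ via the linear ODE system obtained by substituting $q(x,t)=\hat q(t)e^{ik_jx}$. *)

From Stdlib Require Import Reals.
From Coquelicot Require Import Coquelicot.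
Open Scope R_scope.

Definition cexp (z : C) : C :=
  (exp (Re z) * cos (Im z), exp (Re z) * sin (Im z)).

Definition ci : C := (0, 1).

Fixpoint csum (f : nat -> C) (n : nat) : C :=
  match n with
  | O => 0%C
  | S n' => Cplus (csum f n') (f n')
  end.

Definition cderiv (f : R -> C) (t : R) (l : C) : Prop :=
  is_derive (fun s => Re (f s)) t (Re l) /\ is_derive (fun s => Im (f s)) t (Im l).

Definition sigma0_ok (m : nat) (sigma0 : R) : Prop :=
  (Nat.odd m = true -> sigma0 = 1 \/ sigma0 = -1) /\
  (Nat.even m = true -> sigma0 = (-1) ^ (Nat.div m 2)).

Definition pstar (m : nat) (sigma0 : R) (i j : nat) : R :=
  if negb (Nat.eqb (i + j) m) then 0
  else if Nat.leb (2 * j) m then sigma0 * (-1) ^ (j - 1)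
  else sigma0 * (-1) ^ (m - j).

(* Fourier-mode solution of d_t u + sigma0 d_x^m u = 0 with
   u0(x) = sum_{j<n} vh j e^{i k j x} *)
Definition u_sol (m : nat) (sigma0 : R) (n : nat) (vh k : nat -> R) (x t : R) : C :=
  csum (fun j => Cmult (Cmult (RtoC (vh j))
                    (cexp (Cmult (RtoC (- sigma0 * t)) (Cpow (Cmult ci (RtoC (k j))) m))))
                    (cexp (Cmult ci (RtoC (k j * x))))) n.

(* Q : nat -> R -> C  (components Q 0, ..., Q (m-1) of the Fourier coefficient
   vector of a single mode e^{i kk x}) solves the ODE system obtained by
   substituting q(x,t) = Q(t) e^{i kk x} into the hyperbolic system, with
   initial data Q_l(0) = (i kk)^l vh0 (i.e. q_l(x,0) = d_x^l of the mode). *)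
Definition mode_solution (m : nat) (sigma0 tau kk vh0 : R) (Q : nat -> R -> C) : Prop :=
  (forall l, (l < m)%nat -> Q l 0 = Cmult (Cpow (Cmult ci (RtoC kk)) l) (RtoC vh0)) /\
  (forall t, cderiv (Q 0%nat) t
                (Cmult (Copp (Cmult (RtoC sigma0) (Cmult ci (RtoC kk)))) (Q (m - 1)%nat t))) /\
  (forall i t, (1 <= i <= m - 1)%nat ->
     exists d, cderiv (Q i) t d /\
       Cplus (Cmult (RtoC tau) d)
             (csum (fun l => Cmult (RtoC (pstar m sigma0 i (S l)))
                                   (Cmult (Cmult ci (RtoC kk)) (Q l t))) (m - 1))
       = csum (fun l => Cmult (RtoC (pstar m sigma0 i (S l))) (Q (S l) t)) (m - 1)).

Definition q0_sol (n : nat) (k : nat -> R) (Qs : nat -> nat -> R -> C) (x t : R) : C :=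
  csum (fun j => Cmult (Qs j 0%nat t) (cexp (Cmult ci (RtoC (k j * x))))) n.

From Stdlib Require Import Reals Lra Lia.
From Coquelicot Require Import Coquelicot.
Open Scope R_scope.

(* Each Fourier mode e^{ikx} is treated separately; write w = ik, lambda = -sigma0 w^m and
   u(t) = vh e^{lambda t}.  The relaxed components Q_j are compared with (w^j + tau c_j) u(t),
   where the correctors c_j make this ansatz solve the relaxation system up to a residual of
   order tau in the q_0 equation and tau^2 in the others.  For the errors E_j the energy
   |E_0|^2 + tau sum_{i>=1} |E_i|^2 is dissipated by the principal part: P* is antidiagonal,
   the terms coupled through w cancel because multiplication by w is skew, and the remaining
   pairings cancel because p*_{i,m-i} = -p*_{m-i,i}, except in the middle row (m even) where
   p*_{m/2,m/2} = -1 (this is where the choice of sigma0 enters).  Young's inequality then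
   gives H' <= H + O(tau^2) with H(0) = O(tau^3), Gronwall gives |E_0(T)| = O(tau), and
   E_0 = Q_0 - u because c_0 = 0.  Finitely many modes of modulus one sum to the bound. *)

Fixpoint rsum (f : nat -> R) (n : nat) : R :=
  match n with O => 0 | S n' => rsum f n' + f n' end.

Lemma rsum_ext f g n : (forall i, (i < n)%nat -> f i = g i) -> rsum f n = rsum g n.
Proof.
  induction n as [|n IH]; intros Hfg; simpl; [reflexivity|].
  rewrite IH, Hfg; [reflexivity|lia|intros; apply Hfg; lia].
Qed.

Lemma rsum_le f g n : (forall i, (i < n)%nat -> f i <= g i) -> rsum f n <= rsum g n.
Proof.
  induction n as [|n IH]; intros Hfg; simpl; [lra|].
  apply Rplus_le_compat; [apply IH; intros; apply Hfg|apply Hfg]; lia.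
Qed.

Lemma rsum_plus f g n : rsum (fun i => f i + g i) n = rsum f n + rsum g n.
Proof. induction n as [|n IH]; simpl; [|rewrite IH]; ring. Qed.

Lemma rsum_scal c f n : rsum (fun i => c * f i) n = c * rsum f n.
Proof. induction n as [|n IH]; simpl; [|rewrite IH]; ring. Qed.

Lemma rsum_const c n : rsum (fun _ => c) n = INR n * c.
Proof. induction n as [|n IH]; simpl rsum; [simpl|rewrite IH, S_INR]; ring. Qed.

Lemma rsum_nonneg f n : (forall i, (i < n)%nat -> 0 <= f i) -> 0 <= rsum f n.
Proof.
  intros Hf. replace 0 with (rsum (fun _ => 0) n) by (rewrite rsum_const; ring).
  now apply rsum_le.
Qed.

Lemma rsum_minus f g n : rsum (fun i => f i - g i) n = rsum f n - rsum g n.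
Proof. induction n as [|n IH]; simpl; [|rewrite IH]; ring. Qed.

Lemma rsum_shift f n : (0 < n)%nat -> rsum f n = f O + rsum (fun i => f (S i)) (n - 1).
Proof.
  intros Hn; destruct n as [|n]; [lia|]; rewrite Nat.sub_succ, Nat.sub_0_r.
  induction n as [|n IH]; simpl in *; [|rewrite IH by lia]; ring.
Qed.

Lemma rsum_rev f n : rsum f n = rsum (fun i => f (n - 1 - i)%nat) n.
Proof.
  induction n as [|n IH]; [reflexivity|].
  rewrite (rsum_shift (fun i => f (S n - 1 - i)%nat)) by lia; simpl (rsum f (S n)).
  rewrite IH, Rplus_comm; f_equal.
  - f_equal; lia.
  - rewrite Nat.sub_succ, Nat.sub_0_r; apply rsum_ext; intros i Hi; f_equal; lia.
Qed.

Definition cnorm2 (z : C) : R := fst z ^ 2 + snd z ^ 2.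
Definition cdot (a b : C) : R := fst a * fst b + snd a * snd b.

Lemma cnorm2_ge0 z : 0 <= cnorm2 z.
Proof. unfold cnorm2; nra. Qed.

Lemma cnorm2_mult a b : cnorm2 (a * b)%C = cnorm2 a * cnorm2 b.
Proof. destruct a, b; unfold cnorm2; simpl; ring. Qed.

Lemma cnorm2_RtoC r : cnorm2 (RtoC r) = r ^ 2.
Proof. unfold cnorm2; simpl; ring. Qed.

Lemma cdot_comm a b : cdot a b = cdot b a.
Proof. unfold cdot; ring. Qed.

Lemma cdot_diag a : cdot a a = cnorm2 a.
Proof. unfold cdot, cnorm2; ring. Qed.

Lemma cdot_minus_r a b c : cdot a (b - c)%C = cdot a b - cdot a c.
Proof. destruct a, b, c; unfold cdot; simpl; ring. Qed.

Lemma cdot_scal_r (r : R) a b : cdot a (r * b)%C = r * cdot a b.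
Proof. destruct a, b; unfold cdot; simpl; ring. Qed.

Lemma cdot_skew (kk : R) a b : cdot a (ci * kk * b)%C = - cdot b (ci * kk * a)%C.
Proof. destruct a, b; unfold cdot, ci; simpl; ring. Qed.

Lemma cdot_young e a b : 0 < e -> 2 * cdot a b <= e * cnorm2 a + cnorm2 b / e.
Proof.
  intros He. destruct a as [x y], b as [u v]; unfold cdot, cnorm2; simpl.
  assert (Hsq : 0 <= (e * x - u) ^ 2 / e + (e * y - v) ^ 2 / e).
  { apply Rplus_le_le_0_compat; apply Rdiv_le_0_compat; (apply pow2_ge_0 || lra). }
  replace ((e * x - u) ^ 2 / e + (e * y - v) ^ 2 / e)
    with (e * (x ^ 2 + y ^ 2) + (u ^ 2 + v ^ 2) / e - 2 * (x * u + y * v)) in Hsq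
    by (field; lra).
  lra.
Qed.

Lemma Cpow_pred (z : C) n : (0 < n)%nat -> (z ^ n = z * z ^ (n - 1))%C.
Proof. intros Hn; destruct n as [|n]; [lia|]; simpl; rewrite Nat.sub_0_r; reflexivity. Qed.

Lemma Cmod_cnorm2 z : Cmod z = sqrt (cnorm2 z).
Proof. reflexivity. Qed.

Lemma cnorm2_cexp z : cnorm2 (cexp z) = exp (fst z) ^ 2.
Proof.
  unfold cnorm2, cexp, Re, Im; simpl.
  pose proof (sin2_cos2 (snd z)) as Hsc; unfold Rsqr in Hsc; nra.
Qed.

Lemma Cmod_cexp_imag (r : R) : Cmod (cexp (ci * r)%C) = 1.
Proof.
  rewrite Cmod_cnorm2, cnorm2_cexp; unfold ci; simpl.
  replace (0 * r - 1 * 0) with 0 by ring. rewrite exp_0, !Rmult_1_r; apply sqrt_1.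
Qed.

Lemma is_derive_congr (f g : R -> R) t (l l' : R) :
  (forall s, f s = g s) -> is_derive f t l -> l = l' -> is_derive g t l'.
Proof. intros Hfg Hf <-; exact (is_derive_ext f g t l Hfg Hf). Qed.

Lemma is_derive_rsum (F : nat -> R -> R) (dF : nat -> R) n t :
  (forall i, (i < n)%nat -> is_derive (F i) t (dF i)) ->
  is_derive (fun s => rsum (fun i => F i s) n) t (rsum dF n).
Proof.
  induction n as [|n IH]; intros HF; simpl.
  - apply (is_derive_const 0).
  - apply (is_derive_plus (fun s => rsum (fun i => F i s) n) (F n));
      [apply IH; intros|]; apply HF; lia.
Qed.

Lemma is_derive_lincomb (f g : R -> R) (a b : R) t df dg :
  is_derive f t df -> is_derive g t dg ->
  is_derive (fun s => a * f s + b * g s) t (a * df + b * dg).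
Proof.
  intros Hf Hg.
  apply (is_derive_plus (fun s => a * f s) (fun s => b * g s)); apply is_derive_scal; assumption.
Qed.

Lemma cderiv_cnorm2 f t d : cderiv f t d -> is_derive (fun s => cnorm2 (f s)) t (2 * cdot (f t) d).
Proof.
  intros [Hre Him].
  eapply is_derive_congr with (f := fun s => Re (f s) * Re (f s) + Im (f s) * Im (f s)).
  - intros s; unfold cnorm2, Re, Im; ring.
  - apply (is_derive_plus (fun s => Re (f s) * Re (f s)) (fun s => Im (f s) * Im (f s)));
      [apply (is_derive_mult (fun s => Re (f s))) | apply (is_derive_mult (fun s => Im (f s)))];
      first [eassumption | intros; apply Rmult_comm].
  - unfold cdot, Re, Im, plus, mult; simpl; ring.
Qed.

Lemma cderiv_sub_mul f g c t df dg : cderiv f t df -> cderiv g t dg ->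
  cderiv (fun s => f s - c * g s)%C t (df - c * dg)%C.
Proof.
  intros [F1 F2] [G1 G2]; unfold Re, Im in *; split.
  - pose proof (is_derive_lincomb _ _ 1 (-1) t _ _ F1
      (is_derive_lincomb _ _ (fst c) (- snd c) t _ _ G1 G2)) as H.
    eapply is_derive_congr; [|exact H|]; intros; simpl; ring.
  - pose proof (is_derive_lincomb _ _ 1 (-1) t _ _ F2
      (is_derive_lincomb _ _ (fst c) (snd c) t _ _ G2 G1)) as H.
    eapply is_derive_congr; [|exact H|]; intros; simpl; ring.
Qed.

Lemma csum_minus (f g : nat -> C) n : (csum f n - csum g n)%C = csum (fun j => f j - g j)%C n.
Proof. induction n as [|n IH]; simpl; [|rewrite <- IH]; ring. Qed.

Lemma Cmod_csum (f : nat -> C) n : Cmod (csum f n) <= rsum (fun j => Cmod (f j)) n.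
Proof.
  induction n as [|n IH]; simpl; [rewrite Cmod_0; lra|].
  eapply Rle_trans; [apply Cmod_triangle | lra].
Qed.

Lemma csum_single (f : nat -> C) n a :
  (a < n)%nat -> (forall l, (l < n)%nat -> l <> a -> f l = 0%C) -> csum f n = f a.
Proof.
  induction n as [|n IH]; intros Ha Hf; [lia|]; simpl.
  destruct (Nat.eq_dec a n) as [-> | Hne].
  - enough (Hz : forall p, (p <= n)%nat -> csum f p = 0%C) by (rewrite Hz; [ring | lia]).
    induction p as [|p IHp]; intros Hp; simpl; [reflexivity|].
    rewrite IHp, Hf by lia; ring.
  - rewrite IH, (Hf n) by (lia || (intros; apply Hf; lia)); ring.
Qed.

Lemma cdot_forcing_le (a X U : C) (c e Bu : R) : 0 < e -> cnorm2 U <= Bu ->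
  - (2 * cdot a (c * X * U)%C) <= e * cnorm2 a + c ^ 2 / e * (cnorm2 X * Bu).
Proof.
  intros He HU.
  pose proof (cdot_young e a (- (c * X * U))%C He) as Hy.
  replace (cdot a (- (c * X * U))%C) with (- cdot a (c * X * U)%C) in Hy
    by (destruct a; unfold cdot; simpl; ring).
  replace (cnorm2 (- (c * X * U))%C) with (c ^ 2 * (cnorm2 X * cnorm2 U)) in Hy
    by (rewrite <- cnorm2_RtoC, <- !cnorm2_mult; destruct X, U; unfold cnorm2; simpl; ring).
  assert (c ^ 2 / e * (cnorm2 X * cnorm2 U) <= c ^ 2 / e * (cnorm2 X * Bu)).
  { apply Rmult_le_compat_l; [apply Rdiv_le_0_compat; [apply pow2_ge_0 | exact He]|].
    apply Rmult_le_compat_l; [apply cnorm2_ge0 | exact HU]. }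
  unfold Rdiv in *; lra.
Qed.

Definition pdiag (m : nat) (s : R) (i : nat) : R := pstar m s i (m - i).

Lemma pstar_off m s i j : (i + j <> m)%nat -> pstar m s i j = 0.
Proof. intros Hij; unfold pstar; destruct (Nat.eqb_spec (i + j) m); [lia | reflexivity]. Qed.

Lemma pdiag_eq m s i : (1 <= i <= m - 1)%nat ->
  pdiag m s i = if Nat.leb (2 * (m - i)) m then s * (-1) ^ (m - i - 1) else s * (-1) ^ i.
Proof.
  intros Hi; unfold pdiag, pstar.
  destruct (Nat.eqb_spec (i + (m - i)) m); [|lia]; simpl negb; cbv iota.
  now replace (m - (m - i))%nat with i by lia.
Qed.

Lemma sign_sq k : (-1) ^ k * (-1) ^ k = 1.
Proof. rewrite <- Rpow_mult_distr, <- pow1 with k; f_equal; ring. Qed.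

Lemma sigma0_sq m s : sigma0_ok m s -> s * s = 1.
Proof.
  intros [Hodd Heven]; destruct (Nat.even m) eqn:E.
  - rewrite Heven by reflexivity; apply sign_sq.
  - assert (Nat.odd m = true) by (unfold Nat.odd; rewrite E; reflexivity).
    destruct (Hodd H) as [-> | ->]; ring.
Qed.

Lemma sigma0_abs m s : sigma0_ok m s -> Rabs s = 1.
Proof.
  intros Hs; pose proof (sigma0_sq m s Hs) as Hss.
  destruct (Rle_lt_dec 0 s); [rewrite Rabs_right | rewrite Rabs_left]; nra.
Qed.

Lemma pdiag_sq m s i : sigma0_ok m s -> (1 <= i <= m - 1)%nat -> pdiag m s i * pdiag m s i = 1.
Proof.
  intros Hs Hi; rewrite pdiag_eq by exact Hi; pose proof (sigma0_sq m s Hs) as Hss.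
  destruct Nat.leb; [pose proof (sign_sq (m - i - 1)) | pose proof (sign_sq i)]; nra.
Qed.

Lemma pdiag_antisym m s i : (1 <= i <= m - 1)%nat -> (2 * i <> m)%nat ->
  pdiag m s i + pdiag m s (m - i) = 0.
Proof.
  intros Hi Hmid; rewrite (pdiag_eq m s i), (pdiag_eq m s (m - i)) by lia.
  replace (m - (m - i))%nat with i by lia.
  destruct (Nat.leb_spec (2 * (m - i)) m), (Nat.leb_spec (2 * i) m); try lia.
  - replace (m - i)%nat with (S (m - i - 1)) at 2 by lia; simpl; ring.
  - replace i with (S (i - 1)) at 1 by lia; simpl; ring.
Qed.

Lemma pdiag_middle m s i : sigma0_ok m s -> (1 <= i)%nat -> (2 * i = m)%nat -> pdiag m s i = -1.
Proof.
  intros [_ Heven] Hi Hmid; rewrite pdiag_eq by lia.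
  destruct (Nat.leb_spec (2 * (m - i)) m); [|lia].
  rewrite Heven by (apply Nat.even_spec; exists i; lia).
  replace (Nat.div m 2) with (S (i - 1)) by (subst m; rewrite Nat.mul_comm, Nat.div_mul; lia).
  replace (m - i - 1)%nat with (i - 1)%nat by lia.
  simpl; pose proof (sign_sq (i - 1)); lra.
Qed.

Lemma pdiag_last m s : (2 <= m)%nat -> pdiag m s (m - 1) = s.
Proof.
  intros Hm; rewrite pdiag_eq by lia.
  destruct (Nat.leb_spec (2 * (m - (m - 1))) m); [|lia].
  replace (m - (m - 1) - 1)%nat with O by lia; simpl; ring.
Qed.

Definition skew_weight (m : nat) (s : R) (i : nat) : R :=
  match i with O => s | _ => pdiag m s i end.

Lemma skew_weight_sym m s i : (2 <= m)%nat -> (i < m)%nat ->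
  skew_weight m s (m - 1 - i) = skew_weight m s i.
Proof.
  intros Hm Hi.
  destruct i as [|i]; simpl skew_weight.
  { replace (m - 1 - 0)%nat with (S (m - 2)) by lia; simpl skew_weight.
    replace (S (m - 2)) with (m - 1)%nat by lia; apply pdiag_last, Hm. }
  destruct (m - 1 - S i)%nat as [|j] eqn:E.
  { replace (S i) with (m - 1)%nat by lia; symmetry; apply pdiag_last, Hm. }
  simpl skew_weight; rewrite <- E, !pdiag_eq by lia.
  destruct (Nat.leb_spec (2 * (m - (m - 1 - S i))) m), (Nat.leb_spec (2 * (m - S i)) m);
    f_equal; f_equal; lia.
Qed.

Section Dissipation.

Variables (m : nat) (s kk : R) (E : nat -> C).
Hypotheses (Hm : (2 <= m)%nat) (Hs : sigma0_ok m s).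

(* Contribution of the principal part of the error system to the derivative of the energy. *)
Definition dissipation : R :=
  - s * cdot (E O) (ci * kk * E (m - 1)%nat)%C
  + rsum (fun i => pdiag m s (S i) * (cdot (E (S i)) (E (m - 1 - i)%nat)
                                      - cdot (E (S i)) (ci * kk * E (m - 2 - i)%nat)%C)) (m - 1).

Lemma skew_sum_zero :
  rsum (fun i => skew_weight m s i * cdot (E i) (ci * kk * E (m - 1 - i)%nat)%C) m = 0.
Proof.
  set (B := rsum _ m).
  enough (B = -1 * B) by lra.
  unfold B at 1; rewrite rsum_rev; unfold B; rewrite <- rsum_scal.
  apply rsum_ext; intros i Hi.
  rewrite skew_weight_sym, cdot_skew by lia.
  replace (m - 1 - (m - 1 - i))%nat with i by lia; ring.
Qed.

Lemma pairing_sum_nonpos :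
  rsum (fun i => pdiag m s (S i) * cdot (E (S i)) (E (m - 1 - i)%nat)) (m - 1) <= 0.
Proof.
  set (A := rsum _ (m - 1)).
  assert (H2A : 2 * A = rsum (fun i => (pdiag m s (S i) + pdiag m s (m - S i))
                                       * cdot (E (S i)) (E (m - 1 - i)%nat)) (m - 1)).
  { replace (2 * A) with (A + A) by ring.
    unfold A at 2; rewrite rsum_rev; unfold A; rewrite <- rsum_plus.
    apply rsum_ext; intros i Hi.
    replace (S (m - 1 - 1 - i)) with (m - S i)%nat by lia.
    replace (m - 1 - (m - 1 - 1 - i))%nat with (S i) by lia.
    replace (m - S i)%nat with (m - 1 - i)%nat at 2 by lia.
    rewrite (cdot_comm (E (m - 1 - i)%nat)); ring. }
  enough (2 * A <= 0) by lra.
  rewrite H2A, <- (Rmult_0_r (INR (m - 1))), <- rsum_const.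
  apply rsum_le; intros i Hi.
  destruct (Nat.eq_dec (2 * S i) m) as [Hmid | Hmid].
  - replace (m - S i)%nat with (S i) by lia; replace (m - 1 - i)%nat with (S i) by lia.
    rewrite pdiag_middle, cdot_diag by (assumption || lia).
    pose proof (cnorm2_ge0 (E (S i))); lra.
  - rewrite pdiag_antisym by lia; lra.
Qed.

Lemma dissipation_nonpos : dissipation <= 0.
Proof.
  pose proof skew_sum_zero as Hskew; pose proof pairing_sum_nonpos as Hpair.
  rewrite rsum_shift, Nat.sub_0_r in Hskew by lia; simpl skew_weight in Hskew.
  unfold dissipation.
  rewrite (rsum_ext _ (fun i => pdiag m s (S i) * cdot (E (S i)) (E (m - 1 - i)%nat)
            - pdiag m s (S i) * cdot (E (S i)) (ci * kk * E (m - 1 - S i)%nat)%C))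
    by (intros i Hi; replace (m - 2 - i)%nat with (m - 1 - S i)%nat by lia; ring).
  rewrite rsum_minus; lra.
Qed.

End Dissipation.

Lemma exp_le_compat x y : x <= y -> exp x <= exp y.
Proof. intros [Hlt | ->]; [left; apply exp_increasing, Hlt | right; reflexivity]. Qed.

Lemma gronwall_affine (H dH : R -> R) (a T : R) : 0 <= a -> 0 <= T ->
  (forall t, is_derive H t (dH t)) -> (forall t, 0 <= t <= T -> dH t <= H t + a) ->
  H T <= exp T * (H 0 + a * T).
Proof.
  intros Ha HT HdH Hrate.
  (* [exp (-t) H t - a t] is nonincreasing on [0, T] *)
  set (phi := fun t => exp (- t) * H t - a * t).
  set (dphi := fun t => exp (- t) * (dH t - H t) - a).
  assert (Hphi : forall t, is_derive phi t (dphi t)).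
  { intros t; unfold phi, dphi.
    assert (Hexp : is_derive (fun x => exp (- x)) t (- exp (- t))).
    { auto_derive; [exact I | ring]. }
    pose proof (is_derive_mult _ _ t _ _ Hexp (HdH t) (fun x y => Rmult_comm x y)) as Hprod.
    pose proof (is_derive_lincomb _ _ 1 (- a) t _ _ Hprod (is_derive_id t)) as Hlin.
    eapply is_derive_congr; [|exact Hlin|]; intros; unfold plus, mult, one; simpl; ring. }
  destruct (Req_dec T 0) as [-> | HT0].
  { rewrite exp_0; lra. }
  destruct (MVT_cor3 phi dphi 0 T) as [c [Hc0 [HcT Hmvt]]]; [lra | |].
  { intros t _ _; apply is_derive_Reals, Hphi. }
  assert (Hdphi : dphi c <= 0).
  { unfold dphi; pose proof (Hrate c (conj Hc0 HcT)).
    assert (exp (- c) <= 1) by (rewrite <- exp_0; apply exp_le_compat; lra).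
    pose proof (exp_pos (- c)); nra. }
  unfold phi in Hmvt; rewrite Ropp_0, exp_0 in Hmvt.
  assert (Hdecay : exp (- T) * H T <= H 0 + a * T) by nra.
  replace (H T) with (exp T * (exp (- T) * H T))
    by (rewrite <- Rmult_assoc, <- exp_plus, Rplus_opp_r, exp_0; ring).
  apply Rmult_le_compat_l; [left; apply exp_pos | exact Hdecay].
Qed.

Section Mode.

Variables (m : nat) (s kk vh0 T tau : R) (Q : nat -> R -> C).
Hypotheses (Hm : (2 <= m)%nat) (Hs : sigma0_ok m s) (Htau : 0 < tau <= 1)
  (HQ : mode_solution m s tau kk vh0 Q).

Local Notation w := (ci * kk)%C.

Definition lambda : C := (RtoC (- s) * w ^ m)%C.

Definition u_mode (t : R) : C := (vh0 * cexp (RtoC (- s * t) * w ^ m))%C.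

Lemma u_mode_0 : u_mode 0 = RtoC vh0.
Proof.
  unfold u_mode, cexp; destruct (w ^ m)%C as [a b]; simpl.
  replace (- s * 0 * a - 0 * b) with 0 by ring; replace (- s * 0 * b + 0 * a) with 0 by ring.
  rewrite exp_0, cos_0, sin_0; unfold RtoC, Cmult; simpl; f_equal; ring.
Qed.

Lemma u_mode_deriv t : cderiv u_mode t (lambda * u_mode t)%C.
Proof.
  unfold u_mode, lambda, cderiv, cexp; destruct (w ^ m)%C as [a b]; simpl.
  split; auto_derive; auto; unfold Rminus; ring.
Qed.

Definition u_bound : R := vh0 ^ 2 * exp (2 * (T * Rabs (fst (w ^ m)%C))).

Lemma u_mode_bound t : 0 <= t <= T -> cnorm2 (u_mode t) <= u_bound.
Proof.
  intros Ht; unfold u_mode, u_bound.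
  rewrite cnorm2_mult, cnorm2_cexp, cnorm2_RtoC.
  apply Rmult_le_compat_l; [apply pow2_ge_0|].
  destruct (w ^ m)%C as [a b]; cbn [fst snd RtoC Cmult].
  replace (exp (- s * t * a - 0 * b) ^ 2)
    with (exp (2 * (- s * t * a))) by (rewrite <- Rsqr_pow2, Rsqr_def, <- exp_plus; f_equal; ring).
  apply exp_le_compat, Rmult_le_compat_l; [lra|].
  assert (Hsa : - (s * a) <= Rabs a).
  { rewrite <- (Rmult_1_l (Rabs a)), <- (sigma0_abs m s Hs), <- Rabs_mult, <- Rabs_Ropp.
    apply Rle_abs. }
  pose proof (Rabs_pos a); nra.
Qed.

(* Chosen so that corrector (m - i) - w * corrector (m - i - 1) = p*_{i,m-i} w^i lambda, which
   cancels the O(tau) residual of row i since (p*_{i,m-i})^2 = 1. *)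
Fixpoint corrector (j : nat) : C :=
  match j with
  | O => 0%C
  | S j' => (w * corrector j' + pdiag m s (m - S j') * w ^ (m - S j') * lambda)%C
  end.

Definition approx (j : nat) : C := (w ^ j + tau * corrector j)%C.

Definition err (j : nat) (t : R) : C := (Q j t - approx j * u_mode t)%C.

(* The equations of mode_solution solved for the time derivative: only the antidiagonal
   entry p*_{i,m-i} survives in row i. *)
Definition Q_rate (j : nat) (t : R) : C :=
  match j with
  | O => (- (s * w) * Q (m - 1)%nat t)%C
  | S _ => (/ tau * pdiag m s j * (Q (m - j)%nat t - w * Q (m - j - 1)%nat t))%C
  end.

Lemma Q_deriv j t : (j <= m - 1)%nat -> cderiv (Q j) t (Q_rate j t).
Proof.
  destruct HQ as [_ [HQ0 HQi]]; intros Hj; destruct j as [|i]; [apply HQ0|].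
  destruct (HQi (S i) t ltac:(lia)) as [d [Hd Heq]].
  assert (Hcollapse : forall g : nat -> C,
    csum (fun l => pstar m s (S i) (S l) * g l)%C (m - 1)
    = (pdiag m s (S i) * g (m - S i - 1)%nat)%C).
  { intros g; rewrite (csum_single (fun l => pstar m s (S i) (S l) * g l)%C _ (m - S i - 1)) by
      (lia || (intros l Hl Hne; rewrite pstar_off by lia; ring)).
    unfold pdiag; do 3 f_equal; lia. }
  rewrite (Hcollapse (fun l => w * Q l t)%C), (Hcollapse (fun l => Q (S l) t)) in Heq.
  replace (S (m - S i - 1)) with (m - S i)%nat in Heq by lia.
  enough (Hd' : d = Q_rate (S i) t) by (rewrite <- Hd'; exact Hd).
  assert (Htau0 : RtoC tau <> 0%C) by (intros Hz; apply RtoC_inj in Hz; lra).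
  replace d with (/ tau * (tau * d))%C by (field; exact Htau0).
  unfold Q_rate.
  replace (tau * d)%C with (pdiag m s (S i) * Q (m - S i)%nat t
                            - pdiag m s (S i) * (w * Q (m - S i - 1)%nat t))%C
    by (rewrite <- Heq; ring).
  ring.
Qed.

Definition err_rate (j : nat) (t : R) : C := (Q_rate j t - approx j * (lambda * u_mode t))%C.

Lemma err_deriv j t : (j <= m - 1)%nat -> cderiv (err j) t (err_rate j t).
Proof. intros Hj; apply cderiv_sub_mul; [apply Q_deriv, Hj | apply u_mode_deriv]. Qed.

Lemma err_rate_0 t : err_rate 0 t =
  (RtoC (- s) * (w * err (m - 1)%nat t) - tau * (s * w * corrector (m - 1)) * u_mode t)%C.
Proof.
  unfold err_rate, Q_rate, err, approx, lambda; simpl corrector; simpl Cpow.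
  rewrite (Cpow_pred w m), RtoC_opp by lia; ring.
Qed.

Lemma tau_Q_rate i t : (1 <= i)%nat ->
  (tau * Q_rate i t)%C = (pdiag m s i * (Q (m - i)%nat t - w * Q (m - i - 1)%nat t))%C.
Proof.
  intros Hi; destruct i as [|i]; [lia|]; unfold Q_rate.
  field; intros Hz; apply RtoC_inj in Hz; lra.
Qed.

Lemma corrector_complement i : (1 <= i <= m - 1)%nat ->
  corrector (m - i) = (w * corrector (m - i - 1) + pdiag m s i * w ^ i * lambda)%C.
Proof.
  intros Hi; remember (m - i - 1)%nat as j eqn:Hj.
  replace (m - i)%nat with (S j) by lia; cbn [corrector].
  replace (m - S j)%nat with i by lia; reflexivity.
Qed.

Lemma err_rate_pos i t : (1 <= i <= m - 1)%nat ->
  (tau * err_rate i t)%C =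
  (pdiag m s i * (err (m - i)%nat t - w * err (m - i - 1)%nat t)
   - (tau * tau)%R * (corrector i * lambda) * u_mode t)%C.
Proof.
  intros Hi.
  assert (Hp2 : (RtoC (pdiag m s i) * RtoC (pdiag m s i))%C = 1%C)
    by (rewrite <- RtoC_mult, pdiag_sq by assumption; reflexivity).
  assert (Hw : (w ^ (m - i) = w * w ^ (m - i - 1))%C) by (apply Cpow_pred; lia).
  replace (tau * err_rate i t)%C with (tau * Q_rate i t - tau * (approx i * (lambda * u_mode t)))%C
    by (unfold err_rate; ring).
  rewrite tau_Q_rate by lia; unfold err, approx.
  replace (w ^ i)%C with (pdiag m s i * pdiag m s i * w ^ i)%C by (rewrite Hp2; ring).
  rewrite corrector_complement, Hw, RtoC_mult by assumption; ring.
Qed.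

Definition energy (t : R) : R :=
  cnorm2 (err 0 t) + tau * rsum (fun i => cnorm2 (err (S i) t)) (m - 1).

Definition energy_rate (t : R) : R :=
  2 * cdot (err 0 t) (err_rate 0 t)
  + tau * rsum (fun i => 2 * cdot (err (S i) t) (err_rate (S i) t)) (m - 1).

Lemma energy_deriv t : is_derive energy t (energy_rate t).
Proof.
  pose proof (is_derive_rsum (fun i x => cnorm2 (err (S i) x))
                (fun i => 2 * cdot (err (S i) t) (err_rate (S i) t)) (m - 1) t) as Hsum.
  pose proof (is_derive_lincomb _ _ 1 tau t _ _
                (cderiv_cnorm2 _ t _ (err_deriv 0 t ltac:(lia)))
                (Hsum ltac:(intros i Hi; apply cderiv_cnorm2, err_deriv; lia))) as H.
  eapply is_derive_congr; [|exact H|]; intros; unfold energy, energy_rate; ring.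
Qed.

Definition forcing_coef : R :=
  cnorm2 (s * w * corrector (m - 1)) + rsum (fun i => cnorm2 (corrector (S i) * lambda)) (m - 1).

Lemma err_rate_0_le t : 0 <= t <= T ->
  2 * cdot (err 0 t) (err_rate 0 t) <=
  2 * (- s * cdot (err 0 t) (w * err (m - 1)%nat t)%C) + cnorm2 (err 0 t)
  + tau ^ 2 * (cnorm2 (s * w * corrector (m - 1)) * u_bound).
Proof.
  intros Ht; rewrite err_rate_0, cdot_minus_r, cdot_scal_r.
  pose proof (cdot_forcing_le (err 0 t) (s * w * corrector (m - 1)) (u_mode t) tau 1 u_bound
                Rlt_0_1 (u_mode_bound t Ht)).
  unfold Rdiv in *; rewrite Rinv_1 in *; lra.
Qed.

Lemma err_rate_pos_le i t : (i < m - 1)%nat -> 0 <= t <= T ->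
  tau * (2 * cdot (err (S i) t) (err_rate (S i) t)) <=
  2 * (pdiag m s (S i) * (cdot (err (S i) t) (err (m - 1 - i)%nat t)
                          - cdot (err (S i) t) (w * err (m - 2 - i)%nat t)%C))
  + tau * cnorm2 (err (S i) t) + tau ^ 2 * (cnorm2 (corrector (S i) * lambda) * u_bound).
Proof.
  intros Hi Ht; pose proof (u_mode_bound t Ht) as HU.
  replace (tau * (2 * cdot (err (S i) t) (err_rate (S i) t)))
    with (2 * cdot (err (S i) t) (tau * err_rate (S i) t)%C) by (rewrite cdot_scal_r; ring).
  rewrite err_rate_pos, cdot_minus_r, cdot_scal_r, cdot_minus_r by lia.
  replace (m - S i)%nat with (m - 1 - i)%nat by lia.
  replace (m - 1 - i - 1)%nat with (m - 2 - i)%nat by lia.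
  pose proof (cdot_forcing_le (err (S i) t) (corrector (S i) * lambda) (u_mode t) (tau * tau)
                tau u_bound (proj1 Htau) HU) as Hforce.
  set (N := cnorm2 (corrector (S i) * lambda) * u_bound) in *.
  assert (HN : 0 <= N)
    by (apply Rmult_le_pos; [apply cnorm2_ge0 | pose proof (cnorm2_ge0 (u_mode t)); lra]).
  assert (Hcube : (tau * tau) ^ 2 / tau * N <= tau ^ 2 * N).
  { replace ((tau * tau) ^ 2 / tau) with (tau ^ 2 * tau) by (field; lra).
    assert (0 <= tau ^ 2 * N) by (apply Rmult_le_pos; [apply pow2_ge_0 | exact HN]); nra. }
  lra.
Qed.

Lemma energy_rate_le t : 0 <= t <= T ->
  energy_rate t <= 2 * dissipation m s kk (fun j => err j t) + energy t
                   + tau ^ 2 * (forcing_coef * u_bound).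
Proof.
  intros Ht; unfold energy_rate, energy, dissipation, forcing_coef.
  rewrite <- rsum_scal.
  eapply Rle_trans.
  { apply Rplus_le_compat; [apply err_rate_0_le, Ht|].
    apply rsum_le; intros i Hi; apply err_rate_pos_le; assumption. }
  rewrite !rsum_plus, !rsum_scal.
  rewrite (rsum_ext (fun i => cnorm2 (corrector (S i) * lambda) * u_bound)
             (fun i => u_bound * cnorm2 (corrector (S i) * lambda))), rsum_scal
    by (intros; apply Rmult_comm).
  right; ring.
Qed.

Lemma err_init j : (j < m)%nat -> err j 0 = (- (tau * (corrector j * vh0)))%C.
Proof.
  destruct HQ as [Hinit _]; intros Hj.
  unfold err, approx; rewrite Hinit, u_mode_0 by exact Hj; ring.
Qed.

Definition init_coef : R := rsum (fun i => cnorm2 (corrector (S i) * vh0)) (m - 1).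

Lemma energy_init : energy 0 <= tau ^ 2 * init_coef.
Proof.
  assert (Hnorm : forall j, (j < m)%nat -> cnorm2 (err j 0) = tau ^ 2 * cnorm2 (corrector j * vh0)).
  { intros j Hj; rewrite err_init by exact Hj.
    destruct (corrector j * vh0)%C; unfold cnorm2; simpl; ring. }
  unfold energy, init_coef; rewrite Hnorm by lia; change (corrector 0) with (RtoC 0).
  rewrite (rsum_ext _ (fun i => tau ^ 2 * cnorm2 (corrector (S i) * vh0))), rsum_scal
    by (intros; apply Hnorm; lia).
  replace (cnorm2 (0 * vh0)%C) with 0 by (unfold cnorm2; simpl; ring).
  assert (0 <= tau ^ 2 * rsum (fun i => cnorm2 (corrector (S i) * vh0)) (m - 1)).
  { apply Rmult_le_pos; [apply pow2_ge_0 | apply rsum_nonneg; intros; apply cnorm2_ge0]. }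
  nra.
Qed.

Definition mode_const : R := exp T * (init_coef + forcing_coef * u_bound * T).

Lemma mode_error_bound : 0 <= T -> Cmod (Q 0 T - u_mode T)%C <= sqrt mode_const * tau.
Proof.
  intros HT.
  assert (Hforce : 0 <= forcing_coef * u_bound).
  { apply Rmult_le_pos.
    - apply Rplus_le_le_0_compat; [apply cnorm2_ge0 | apply rsum_nonneg; intros; apply cnorm2_ge0].
    - pose proof (u_mode_bound 0 (conj (Rle_refl 0) HT)); pose proof (cnorm2_ge0 (u_mode 0)); lra. }
  assert (Hgron : energy T <= exp T * (energy 0 + tau ^ 2 * (forcing_coef * u_bound) * T)).
  { apply (gronwall_affine energy energy_rate);
      [apply Rmult_le_pos; [apply pow2_ge_0 | exact Hforce] | exact HT | exact energy_deriv |].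
    intros t Ht; pose proof (energy_rate_le t Ht).
    pose proof (dissipation_nonpos m s kk (fun j => err j t) Hm Hs); lra. }
  assert (Hleft : cnorm2 (err 0 T) <= energy T).
  { unfold energy; pose proof (rsum_nonneg (fun i => cnorm2 (err (S i) T)) (m - 1)
                                 ltac:(intros; apply cnorm2_ge0)); nra. }
  assert (Hsq : cnorm2 (err 0 T) <= mode_const * tau ^ 2).
  { pose proof energy_init; pose proof (exp_pos T).
    unfold mode_const; nra. }
  assert (Hconst : 0 <= mode_const).
  { unfold mode_const; apply Rmult_le_pos; [left; apply exp_pos|].
    apply Rplus_le_le_0_compat; [apply rsum_nonneg; intros; apply cnorm2_ge0 | nra]. }
  replace (Q 0 T - u_mode T)%C with (err 0 T) by (unfold err, approx; simpl; ring).
  rewrite Cmod_cnorm2, <- (sqrt_pow2 tau), <- sqrt_mult_alt by lra.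
  apply sqrt_le_1_alt; exact Hsq.
Qed.

End Mode.

Theorem theorem3 (m : nat) (sigma0 : R) (n : nat) (vh k : nat -> R) (T : R) :
  (2 <= m)%nat -> sigma0_ok m sigma0 -> 0 <= T ->
  exists Cst delta : R, 0 < Cst /\ 0 < delta /\
    forall tau : R, 0 < tau < delta ->
    forall Qs : nat -> nat -> R -> C,
      (forall j, (j < n)%nat -> mode_solution m sigma0 tau (k j) (vh j) (Qs j)) ->
      forall x : R, Cmod (Cminus (q0_sol n k Qs x T) (u_sol m sigma0 n vh k x T)) <= Cst * tau.
Proof.
  intros Hm Hs HT.
  set (c := fun j => sqrt (mode_const m sigma0 (k j) (vh j) T)).
  assert (Hc : 0 <= rsum c n) by (apply rsum_nonneg; intros; apply sqrt_pos).
  exists (1 + rsum c n), 1; split; [lra | split; [lra|]].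
  intros tau Htau Qs HQs x.
  unfold q0_sol, u_sol; rewrite csum_minus.
  eapply Rle_trans; [apply Cmod_csum|].
  eapply Rle_trans; [apply (rsum_le _ (fun j => tau * c j)) |].
  - intros j Hj.
    transitivity (Cmod ((Qs j O T - u_mode m sigma0 (k j) (vh j) T) * cexp (ci * (k j * x)%R))%C).
    { right; f_equal; unfold u_mode; ring. }
    rewrite Cmod_mult, Cmod_cexp_imag, Rmult_1_r, Rmult_comm.
    apply mode_error_bound; auto; lra.
  - rewrite rsum_scal; nra.
Qed.
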